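(* For $n\ge 1$, let $S_n$ denote the bitsum (number of $1$s) of a persolus bitstring of length $n$ chosen uniformly at random among all persolus bitstrings of length $n$. Then \[ \lim_{n\to\infty}\frac{\mathbb{E}(S_n)}{n}=\frac{1}{3}\left[1-\left(\frac{31+3\sqrt{93}}{1922}\right)^{1/3}-\left(\frac{31-3\sqrt{93}}{1922}\right)^{1/3}\right]=0.1942540040\ldots, \] \[ \lim_{n\to\infty}\frac{\mathbb{V}(S_n)}{n}=\frac{1}{2883}\left(\frac{93}{2}\right)^{1/3}\left[\left(8649+457\sqrt{93}\right)^{1/3}+\left(8649-457\sqrt{93}\right)^{1/3}\right]=0.0495615175\ldots \]
   Context: A finite bitstring (a finite word over $\{0,1\}$) is called persolus if every $1$ in it is isolated (no two $1$s are adjacent) and each of its $0$s has at least one neighboring (adjacent) $0$. For every $n\ge1$ there is at least one persolus bitstring of length $n$. $\mathbb{E}$ and $\mathbb{V}$ denote expectation and variance with respect to the uniform distribution on persolus bitstrings of length $n$. *)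

From Stdlib Require Import Reals List Arith Bool.
Import ListNotations.
Open Scope R_scope.

Fixpoint all_bits (n : nat) : list (list bool) :=
  match n with
  | O => [[]]
  | S k => map (cons false) (all_bits k) ++ map (cons true) (all_bits k)
  end.

(* i-th bit (0-indexed); positions outside the string read as false,
   but every use below is guarded by explicit bounds where it matters. *)
Definition bit (s : list bool) (i : nat) : bool := nth i s false.

Definition ones_isolated (s : list bool) : bool :=
  forallb (fun i => negb (bit s i && bit s (S i))) (seq 0 (length s)).

Definition zeros_have_zero_neighbour (s : list bool) : bool :=
  forallb (fun i =>
     bit s i
     || (Nat.ltb 0 i && negb (bit s (i - 1)))
     || (Nat.ltb (S i) (length s) && negb (bit s (S i))))
    (seq 0 (length s)).

Definition persolus (s : list bool) : bool :=
  ones_isolated s && zeros_have_zero_neighbour s.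

Definition persolus_strings (n : nat) : list (list bool) :=
  filter persolus (all_bits n).

Definition bitsum (s : list bool) : nat := length (filter (fun b => b) s).

Definition sumR (l : list R) : R := fold_right Rplus 0 l.

Definition ES (n : nat) : R :=
  sumR (map (fun s => INR (bitsum s)) (persolus_strings n))
  / INR (length (persolus_strings n)).

Definition VS (n : nat) : R :=
  sumR (map (fun s => (INR (bitsum s) - ES n) ^ 2) (persolus_strings n))
  / INR (length (persolus_strings n)).

From Stdlib Require Import Reals Lra Lia List Bool.
Open Scope R_scope.

(* A persolus string of length at least 3 starts with 00 or 100, and the rest is
   any [s] such that [00s] is persolus; the latter strings decompose the same way.
   Hence, for every weight [phi] of the bitsum, the sums [P phi n] of [phi (bitsum s)]
   over persolus strings satisfy [P phi (n+6) = P phi (n+5) + P (phi o S) (n+3)].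
   Taking [phi] = 1, [b], [b^2] and rescaling by [lam^n], where [lam = 1 - h] is the
   real root of [lam^3 = 1 - lam], the count [X], first moment [Y] and second moment
   [Z] satisfy [u (n+3) = (1 - h) u (n+2) + h u n + f n] with forcings [0], [h X] and
   [h (2 Y + X)].  The characteristic polynomial is [(x - 1) (x^2 + h x + h)], whose
   quadratic factor is damped since [2 h < 1].  This yields [X -> xi] with
   [n (X - xi) -> 0], [Y = y1 n + y0 + o(1)] and [Z = z2 n^2 + z1 n + o(n)], from
   which the mean [Y / X] and variance [Z / X - (Y / X)^2] grow like
   [h / (1 + 2 h) n] and [h (1 - h) / (1 + 2 h)^3 n]; Cardano's formula evaluates
   these constants. *)

Lemma forallb_ext {A} (f g : A -> bool) l :
  (forall x, f x = g x) -> forallb f l = forallb g l.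
Proof. intros E; induction l as [|x l IH]; cbn; now rewrite ?E, ?IH. Qed.

Lemma forallb_map {A B} (f : B -> bool) (g : A -> B) l :
  forallb f (map g l) = forallb (fun x => f (g x)) l.
Proof. induction l as [|x l IH]; cbn; now rewrite ?IH. Qed.

Lemma seq_0_S n : seq 0 (S n) = 0%nat :: map S (seq 0 n).
Proof. cbn; now rewrite seq_shift. Qed.

Lemma ones_isolated_cons b s :
  ones_isolated (b :: s) = negb (b && bit s 0) && ones_isolated s.
Proof.
  unfold ones_isolated; cbn [length]; rewrite seq_0_S; cbn [forallb].
  now rewrite forallb_map.
Qed.

(* [zeros_paired z s]: every 0 of [s] has a neighbouring 0, where the bit just
   before [s] is taken to be a 0 exactly when [z] holds. *)
Definition zeros_paired (z : bool) (s : list bool) : bool :=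
  forallb (fun i => bit s i
     || match i with O => z | S j => negb (bit s j) end
     || (Nat.ltb (S i) (length s) && negb (bit s (S i))))
    (seq 0 (length s)).

Lemma zeros_paired_cons z b s : zeros_paired z (b :: s) =
  (b || z || (Nat.ltb 1 (S (length s)) && negb (bit s 0))) && zeros_paired (negb b) s.
Proof.
  unfold zeros_paired; cbn [length]; rewrite seq_0_S; cbn [forallb].
  rewrite forallb_map; f_equal; apply forallb_ext; now intros [|i].
Qed.

Lemma persolus_zeros_paired s : persolus s = ones_isolated s && zeros_paired false s.
Proof.
  unfold persolus, zeros_have_zero_neighbour, zeros_paired; f_equal.
  apply forallb_ext; intros [|i]; cbn; rewrite ?Nat.sub_0_r; reflexivity.
Qed.

Ltac persolus_unfold :=
  rewrite !persolus_zeros_paired, ?ones_isolated_cons, ?zeros_paired_cons; cbn;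
  rewrite ?zeros_paired_cons; cbn.

Lemma persolus_000 u : persolus (false :: false :: false :: u) = persolus (false :: false :: u).
Proof. persolus_unfold; reflexivity. Qed.

Lemma persolus_001 u : persolus (false :: false :: true :: u) = persolus (true :: u).
Proof. persolus_unfold; reflexivity. Qed.

Lemma persolus_10 u : persolus (true :: false :: u) = persolus (false :: u).
Proof. persolus_unfold; reflexivity. Qed.

Lemma persolus_11 u : persolus (true :: true :: u) = false.
Proof. persolus_unfold; reflexivity. Qed.

Lemma persolus_01 u : persolus (false :: true :: u) = false.
Proof. persolus_unfold; now rewrite andb_false_r. Qed.

Definition wsum (P : list bool -> bool) (g : list bool -> R) (n : nat) : R :=
  sumR (map g (filter P (all_bits n))).

Lemma sumR_app l1 l2 : sumR (l1 ++ l2) = sumR l1 + sumR l2.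
Proof. unfold sumR; induction l1 as [|x l IH]; cbn; [lra | rewrite IH; lra]. Qed.

Lemma wsum_S P g n : wsum P g (S n) =
  wsum (fun s => P (false :: s)) (fun s => g (false :: s)) n +
  wsum (fun s => P (true :: s)) (fun s => g (true :: s)) n.
Proof.
  unfold wsum; cbn [all_bits].
  now rewrite filter_app, map_app, sumR_app, !filter_map_swap, !map_map.
Qed.

Lemma wsum_ext P P' g g' n : (forall s, P s = P' s) -> (forall s, g s = g' s) ->
  wsum P g n = wsum P' g' n.
Proof. intros HP Hg; unfold wsum; now rewrite (filter_ext _ _ HP), (map_ext _ _ Hg). Qed.

Lemma wsum_pred0 P g n : (forall s, P s = false) -> wsum P g n = 0.
Proof. intros HP; unfold wsum; induction (all_bits n) as [|s l IH]; cbn; now rewrite ?HP. Qed.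

Lemma wsum_add P f g n : wsum P (fun s => f s + g s) n = wsum P f n + wsum P g n.
Proof. unfold wsum, sumR; induction (filter P (all_bits n)); cbn; lra. Qed.

Lemma wsum_scale P c f n : wsum P (fun s => c * f s) n = c * wsum P f n.
Proof. unfold wsum, sumR; induction (filter P (all_bits n)); cbn; lra. Qed.

Definition persolus00 (s : list bool) : bool := persolus (false :: false :: s).

Lemma wsum_persolus00_rec g n : wsum persolus00 g (S (S (S n))) =
  wsum persolus00 (fun s => g (false :: s)) (S (S n)) +
  wsum persolus00 (fun s => g (true :: false :: false :: s)) n.
Proof.
  rewrite wsum_S; f_equal.
  - apply wsum_ext; [intros s; apply persolus_000 | easy].
  - rewrite wsum_S, (wsum_pred0 (fun s => persolus00 (true :: true :: s))), Rplus_0_r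
      by (intros; unfold persolus00; rewrite persolus_001; apply persolus_11).
    rewrite wsum_S, (wsum_pred0 (fun s => persolus00 (true :: false :: true :: s))), Rplus_0_r
      by (intros; unfold persolus00; rewrite persolus_001, persolus_10; apply persolus_01).
    apply wsum_ext; [|easy].
    intros s; unfold persolus00; now rewrite persolus_001, persolus_10.
Qed.

Lemma wsum_persolus_rec g n : wsum persolus g (S (S (S n))) =
  wsum persolus00 (fun s => g (false :: false :: s)) (S n) +
  wsum persolus00 (fun s => g (true :: false :: false :: s)) n.
Proof.
  rewrite wsum_S, (wsum_S (fun s => persolus (false :: s))).
  rewrite (wsum_pred0 (fun s => persolus (false :: true :: s))), Rplus_0_r
    by (intros; apply persolus_01).
  f_equal.
  rewrite wsum_S, (wsum_pred0 (fun s => persolus (true :: true :: s))), Rplus_0_r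
    by (intros; apply persolus_11).
  rewrite wsum_S, (wsum_pred0 (fun s => persolus (true :: false :: true :: s))), Rplus_0_r
    by (intros; rewrite persolus_10; apply persolus_01).
  apply wsum_ext; [|easy].
  intros s; unfold persolus00; apply persolus_10.
Qed.

Definition pmoment (phi : nat -> R) (n : nat) : R :=
  wsum persolus (fun s => phi (bitsum s)) n.

Lemma pmoment_rec phi m :
  pmoment phi (6 + m) = pmoment phi (5 + m) + pmoment (fun b => phi (S b)) (3 + m).
Proof.
  set (G := fun psi n => wsum persolus00 (fun s => psi (bitsum s)) n).
  assert (Hsplit : forall psi n,
    pmoment psi (S (S (S n))) = G psi (S n) + G (fun b => psi (S b)) n).
  { intros psi n; apply wsum_persolus_rec. }
  assert (HG : forall psi n, G psi (S (S (S n))) = G psi (S (S n)) + G (fun b => psi (S b)) n).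
  { intros psi n; apply wsum_persolus00_rec. }
  cbn [Nat.add]; rewrite !Hsplit, (HG phi (S m)), (HG (fun b => phi (S b)) m); ring.
Qed.

Lemma pmoment_succ_id n :
  pmoment (fun b => INR (S b)) n = pmoment INR n + pmoment (fun _ => 1) n.
Proof.
  unfold pmoment; rewrite <- wsum_add; apply wsum_ext; [easy | intros; apply S_INR].
Qed.

Lemma pmoment_succ_sqr n : pmoment (fun b => INR (S b) ^ 2) n =
  pmoment (fun b => INR b ^ 2) n + 2 * pmoment INR n + pmoment (fun _ => 1) n.
Proof.
  unfold pmoment; rewrite <- wsum_scale, <- !wsum_add.
  apply wsum_ext; [easy | intros; rewrite S_INR; ring].
Qed.

Lemma pmoment_count_pos m : 0 < pmoment (fun _ => 1) (3 + m).
Proof.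
  enough (H : forall m, 1 <= pmoment (fun _ => 1) (3 + m) /\
    1 <= pmoment (fun _ => 1) (4 + m) /\ 1 <= pmoment (fun _ => 1) (5 + m))
    by (destruct (H m); lra).
  clear m; intros m; induction m as [|m IH].
  - unfold pmoment, wsum, sumR; cbn; lra.
  - destruct IH as (H3 & H4 & H5); repeat split; try assumption.
    change (1 <= pmoment (fun _ => 1) (6 + m)); rewrite pmoment_rec; lra.
Qed.

Lemma length_persolus_strings n :
  INR (length (persolus_strings n)) = pmoment (fun _ => 1) n.
Proof.
  unfold pmoment, wsum, sumR; fold (persolus_strings n).
  induction (persolus_strings n) as [|s l IH]; cbn [length map fold_right]; [easy|].
  rewrite S_INR, IH; ring.
Qed.

Lemma ES_pmoment n : ES n = pmoment INR n / pmoment (fun _ => 1) n.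
Proof. unfold ES; now rewrite length_persolus_strings. Qed.

Lemma VS_pmoment n : pmoment (fun _ => 1) n <> 0 ->
  VS n = pmoment (fun b => INR b ^ 2) n / pmoment (fun _ => 1) n - ES n ^ 2.
Proof.
  intros Hn; unfold VS; rewrite length_persolus_strings.
  replace (sumR _) with (pmoment (fun b => INR b ^ 2) n + (-2 * ES n) * pmoment INR n
    + ES n ^ 2 * pmoment (fun _ => 1) n).
  - rewrite ES_pmoment; field; exact Hn.
  - unfold pmoment; rewrite <- !wsum_scale, <- !wsum_add.
    apply wsum_ext; [easy | intros; ring].
Qed.

Lemma cv_const c : Un_cv (fun _ => c) c.
Proof. intros eps Heps; exists 0%nat; intros; unfold Rdist; rewrite Rminus_diag, Rabs_R0; lra. Qed.

Lemma cv_limit_eq u l l' : Un_cv u l -> l = l' -> Un_cv u l'.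
Proof. now intros ? <-. Qed.

Lemma cv_eventually_ext u v l N :
  (forall n, (N <= n)%nat -> u n = v n) -> Un_cv u l -> Un_cv v l.
Proof.
  intros E Hu eps Heps; destruct (Hu eps Heps) as [M HM]; exists (max N M).
  intros n Hn; rewrite <- E by lia; apply HM; lia.
Qed.

Lemma cv_S u l : Un_cv u l -> Un_cv (fun n => u (S n)) l.
Proof.
  intros Hu eps Heps; destruct (Hu eps Heps) as [N HN]; exists N.
  intros n Hn; apply HN; lia.
Qed.

Lemma cv_inv u l : Un_cv u l -> l <> 0 -> Un_cv (fun n => / u n) (/ l).
Proof.
  intros Hu Hl; apply (continuity_seq Rinv u l); [|exact Hu].
  apply (continuity_pt_inv id l); [|exact Hl].
  apply derivable_continuous_pt, derivable_pt_id.
Qed.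

Lemma cv_inv_INR : Un_cv (fun n => / INR n) 0.
Proof.
  apply cv_infty_cv_0; intros M.
  destruct (INR_unbounded M) as [N HN]; exists (S N); intros n Hn.
  apply le_INR in Hn; rewrite S_INR in Hn; lra.
Qed.

Lemma cv_div_INR_of_diff u L :
  Un_cv (fun n => u (S n) - u n) L -> Un_cv (fun n => u n / INR n) L.
Proof.
  intros Hd.
  assert (Htel : forall n, sum_f_R0 (fun k => u (S k) - u k) n = u (S n) - u 0%nat).
  { induction n as [|n IH]; cbn; [|rewrite IH]; ring. }
  apply (cv_eventually_ext
    (fun n => sum_f_R0 (fun k => u (S k) - u k) (pred n) / INR n + u 0%nat * / INR n) _ _ 1).
  - intros [|n] Hn; [lia|]; cbn [pred]; rewrite Htel.
    field; apply not_0_INR; lia.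
  - apply cv_limit_eq with (L + u 0%nat * 0); [|ring].
    apply CV_plus; [apply Cesaro_1, Hd|].
    apply CV_mult; [apply cv_const | apply cv_inv_INR].
Qed.

Ltac solve_cv :=
  first
  [ eassumption
  | match goal with
    | |- Un_cv (fun n => @?a n + @?b n) _ => eapply (CV_plus a b); solve_cv
    | |- Un_cv (fun n => @?a n - @?b n) _ => eapply (CV_minus a b); solve_cv
    | |- Un_cv (fun n => @?a n * @?b n) _ => eapply (CV_mult a b); solve_cv
    | |- Un_cv (fun n => @?a n / ?c) _ =>
        eapply (CV_mult a (fun _ => / c)); [solve_cv | apply cv_const]
    | |- Un_cv (fun n => - @?a n) _ => eapply (CV_opp a); solve_cv
    | |- Un_cv (fun n => ?c) _ => apply cv_const
    end ].

Lemma contraction_cv0 (Q g : nat -> R) k :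
  0 <= k < 1 -> (forall n, 0 <= Q n) -> (forall n, Q (S n) <= k * Q n + g n) ->
  Un_cv g 0 -> Un_cv Q 0.
Proof.
  intros Hk HQ Hstep Hg eps Heps.
  destruct (Hg (eps * (1 - k) / 2)) as [N HN].
  { apply Rmult_lt_0_compat; [apply Rmult_lt_0_compat|]; lra. }
  (* [eps / 2] is the fixed point of [q |-> k q + eps (1 - k) / 2]. *)
  assert (Hiter : forall j, Q (N + j)%nat <= k ^ j * Q N + eps / 2).
  { induction j as [|j IH]; [rewrite Nat.add_0_r; cbn; lra|].
    rewrite Nat.add_succ_r; specialize (HN (N + j)%nat ltac:(lia)).
    unfold Rdist in HN; rewrite Rminus_0_r in HN.
    pose proof (Rle_abs (g (N + j)%nat)).
    pose proof (Rmult_le_compat_l k _ _ (proj1 Hk) IH).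
    pose proof (Hstep (N + j)%nat); cbn; lra. }
  destruct (pow_lt_1_zero k ltac:(rewrite Rabs_pos_eq; lra) (eps / 2 / (Q N + 1))) as [M HM].
  { pose proof (HQ N); apply Rdiv_lt_0_compat; lra. }
  exists (N + M)%nat; intros n Hn; unfold Rdist.
  rewrite Rminus_0_r, Rabs_pos_eq by apply HQ.
  replace n with (N + (n - N))%nat by lia.
  specialize (HM (n - N)%nat ltac:(lia)); specialize (Hiter (n - N)%nat).
  pose proof (HQ N); pose proof (pow_le k (n - N) (proj1 Hk)).
  rewrite Rabs_pos_eq in HM by assumption.
  apply Rle_lt_trans with (k ^ (n - N) * (Q N + 1) + eps / 2); [nra|].
  apply Rmult_lt_compat_r with (r := Q N + 1) in HM; [|lra].
  unfold Rdiv in HM; rewrite Rmult_assoc, Rinv_l in HM by lra; lra.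
Qed.

Definition rec2 (a b : R) (w e : nat -> R) : Prop :=
  forall n, w (S (S n)) + a * w (S n) + b * w n = e n.

Section SecondOrder.

Variables a b : R.
Hypothesis Hab : Rabs a + Rabs b < 1.

Lemma rec2_cv0 w e : rec2 a b w e -> Un_cv e 0 -> Un_cv w 0.
Proof.
  intros Hrec He.
  pose proof (Rabs_pos a); pose proof (Rabs_pos b).
  (* Since [k = |a| + c] and [|b| <= k c], the quantity [|w (S n)| + c |w n|]
     contracts by the factor [k < 1] up to [|e n|]. *)
  set (c := (1 - Rabs a + Rabs b) / 2); set (k := (1 + Rabs a + Rabs b) / 2).
  set (Q := fun n => Rabs (w (S n)) + c * Rabs (w n)).
  assert (HQ : Un_cv Q 0).
  { apply (contraction_cv0 Q (fun n => Rabs (e n)) k).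
    - unfold k; lra.
    - intros n; unfold Q, c; pose proof (Rabs_pos (w (S n))); pose proof (Rabs_pos (w n)); nra.
    - intros n; unfold Q.
      assert (Hw : Rabs (w (S (S n))) <=
        Rabs a * Rabs (w (S n)) + Rabs b * Rabs (w n) + Rabs (e n)).
      { replace (w (S (S n))) with (a * - w (S n) + (b * - w n + e n)) by (rewrite <- Hrec; ring).
        rewrite <- (Rabs_Ropp (w (S n))), <- (Rabs_Ropp (w n)), <- !Rabs_mult.
        pose proof (Rabs_triang (a * - w (S n)) (b * - w n + e n)).
        pose proof (Rabs_triang (b * - w n) (e n)); lra. }
      assert (Hbc : Rabs b <= k * c) by (unfold k, c; nra).
      assert (Hk : k = Rabs a + c) by (unfold k, c; lra).
      pose proof (Rmult_le_compat_r _ _ _ (Rabs_pos (w n)) Hbc).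
      rewrite Hk in *; lra.
    - replace 0 with (Rabs 0) by apply Rabs_R0; now apply cv_cvabs. }
  apply (CV_shift w 1); intros eps Heps; destruct (HQ eps Heps) as [N HN].
  exists N; intros n Hn; specialize (HN n Hn); unfold Rdist, Q in *.
  rewrite Rminus_0_r in *; rewrite Nat.add_1_r.
  assert (0 <= c) by (unfold c; lra).
  pose proof (Rabs_pos (w n)); pose proof (Rabs_pos (w (S n))).
  rewrite Rabs_pos_eq in HN by nra; nra.
Qed.

Lemma char_poly_at_1_pos : 0 < 1 + a + b.
Proof.
  pose proof (Rle_abs (- a)); pose proof (Rle_abs (- b)); rewrite Rabs_Ropp in *; lra.
Qed.

Lemma rec2_cv w e E : rec2 a b w e -> Un_cv e E -> Un_cv w (E / (1 + a + b)).
Proof.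
  intros Hrec He; pose proof char_poly_at_1_pos.
  assert (Hdev : Un_cv (fun n => w n - E / (1 + a + b)) 0).
  { apply (rec2_cv0 _ (fun n => e n - E)).
    - intros n; rewrite <- Hrec; field; lra.
    - apply cv_limit_eq with (E - E); [solve_cv | ring]. }
  apply (Un_cv_ext (fun n => w n - E / (1 + a + b) + E / (1 + a + b))); [intros; ring|].
  apply cv_limit_eq with (0 + E / (1 + a + b)); [solve_cv | ring].
Qed.

Lemma rec2_affine_cv w e alpha beta : rec2 a b w e ->
  Un_cv (fun n => e n - alpha * INR n) beta ->
  Un_cv (fun n => w n - alpha / (1 + a + b) * INR n)
    ((beta - alpha * (2 + a) / (1 + a + b)) / (1 + a + b)).
Proof.
  intros Hrec He; pose proof char_poly_at_1_pos.
  apply (rec2_cv _ (fun n => e n - alpha * INR n - alpha * (2 + a) / (1 + a + b))).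
  - intros n; rewrite <- Hrec, !S_INR; field; lra.
  - solve_cv.
Qed.

Lemma rec2_homogeneous_fast w :
  rec2 a b w (fun _ => 0) -> Un_cv (fun n => INR n * w n) 0.
Proof.
  intros Hrec.
  assert (Hw : Un_cv w 0) by (apply (rec2_cv0 _ _ Hrec), cv_const).
  pose proof (cv_S _ _ Hw) as Hw1; pose proof (cv_S _ _ Hw1) as Hw2; cbv beta in Hw1, Hw2.
  apply (rec2_cv0 _ (fun n => 2 * w (S (S n)) + a * w (S n))).
  - intros n; pose proof (Hrec n); rewrite !S_INR.
    replace (2 * w (S (S n)) + a * w (S n)) with
      (2 * w (S (S n)) + a * w (S n) + INR n * (w (S (S n)) + a * w (S n) + b * w n)) by nra.
    ring.
  - apply cv_limit_eq with (2 * 0 + a * 0); [solve_cv | ring].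
Qed.

End SecondOrder.

Lemma ratio_mean_cv (alpha beta : nat -> R) A B1 B0 :
  (forall n, alpha n <> 0) -> A <> 0 -> Un_cv alpha A ->
  Un_cv (fun n => beta n - B1 * INR n) B0 ->
  Un_cv (fun n => beta n / alpha n / INR n) (B1 / A).
Proof.
  intros Hal HA Halpha Hbeta.
  pose proof (cv_inv _ _ Halpha HA); pose proof cv_inv_INR.
  apply (cv_eventually_ext
    (fun n => ((beta n - B1 * INR n) * / INR n + B1) * / alpha n) _ _ 1).
  - intros n Hn; assert (INR n <> 0) by (apply not_0_INR; lia).
    field; auto.
  - apply cv_limit_eq with ((B0 * 0 + B1) * / A); [solve_cv | field; auto].
Qed.

(* Writing [alpha = A + d/n], [beta = B1 n + b], [gamma = C2 n^2 + g n], the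
   identity [C2 A = B1^2] cancels the [n^2] terms of [gamma alpha - beta^2]. *)
Lemma ratio_variance_cv (alpha beta gamma : nat -> R) A B1 B0 C2 C1 :
  (forall n, alpha n <> 0) -> A <> 0 -> Un_cv alpha A ->
  Un_cv (fun n => INR n * (alpha n - A)) 0 ->
  Un_cv (fun n => beta n - B1 * INR n) B0 ->
  Un_cv (fun n => (gamma n - C2 * INR n ^ 2) / INR n) C1 ->
  C2 * A = B1 ^ 2 ->
  Un_cv (fun n => (gamma n / alpha n - (beta n / alpha n) ^ 2) / INR n)
    (C1 / A - 2 * B1 * B0 / A ^ 2).
Proof.
  intros Hal HA Halpha Hd Hb Hg HC.
  pose proof (cv_inv _ _ Halpha HA); pose proof cv_inv_INR.
  set (d := fun n => INR n * (alpha n - A)) in Hd.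
  set (b := fun n => beta n - B1 * INR n) in Hb.
  set (g := fun n => (gamma n - C2 * INR n ^ 2) / INR n) in Hg.
  apply (cv_eventually_ext (fun n =>
    (C2 * d n + g n * A - 2 * B1 * b n + (g n * d n - b n * b n) * / INR n)
      * (/ alpha n * / alpha n)) _ _ 1).
  - intros n Hn; assert (INR n <> 0) by (apply not_0_INR; lia).
    unfold d, b, g; replace C2 with (B1 ^ 2 / A) by (rewrite <- HC; field; auto).
    field; auto.
  - apply cv_limit_eq with
      ((C2 * 0 + C1 * A - 2 * B1 * B0 + (C1 * 0 - B0 * B0) * 0) * (/ A * / A));
      [solve_cv|].
    replace C2 with (B1 ^ 2 / A) by (rewrite <- HC; field; auto); field; auto.
Qed.

Definition rec3 (h : R) (u f : nat -> R) : Prop :=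
  forall n, u (S (S (S n))) = (1 - h) * u (S (S n)) + h * u n + f n.

Definition diff (u : nat -> R) (n : nat) : R := u (S n) - u n.

Section ThirdOrder.

(* The characteristic polynomial [x^3 - (1 - h) x^2 - h] of [rec3] factors as
   [(x - 1) (x^2 + h x + h)]; the quadratic factor governs [diff u] (see
   [rec3_diff]) and is damped when [2 h < 1]. *)
Variable h : R.
Hypothesis h_range : 0 <= h < 1 / 2.

Lemma rec3_damped : Rabs h + Rabs h < 1.
Proof. rewrite Rabs_pos_eq; lra. Qed.

Lemma rec3_diff u f : rec3 h u f -> rec2 h h (diff u) f.
Proof. intros Hrec n; unfold diff; rewrite Hrec; ring. Qed.

(* [u (n+2) + h u (n+1) + h u n] has increments [f n], and subtracting
   [diff u (n+1) + (1 + h) diff u n] from it leaves [(1 + 2 h) u n]. *)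
Lemma rec3_repr u f G : rec3 h u f -> (forall n, G (S n) - G n = f n) ->
  forall n, (1 + 2 * h) * u n =
    u 2%nat + h * u 1%nat + h * u 0%nat - G 0%nat + G n - diff u (S n) - (1 + h) * diff u n.
Proof.
  intros Hrec HG n; unfold diff.
  enough (u (S (S n)) + h * u (S n) + h * u n - G n = u 2%nat + h * u 1%nat + h * u 0%nat - G 0%nat)
    by lra.
  induction n as [|n IH]; [reflexivity|].
  rewrite <- IH, Hrec, <- HG; ring.
Qed.

Variables X Y Z : nat -> R.
Hypothesis X_rec : rec3 h X (fun _ => 0).
Hypothesis Y_rec : rec3 h Y (fun n => h * X n).
Hypothesis Z_rec : rec3 h Z (fun n => h * (2 * Y n + X n)).
Hypothesis X_pos : forall n, 0 < X n.

Let K := 1 + 2 * h.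
Let xi := (X 2%nat + h * X 1%nat + h * X 0%nat) / K.

Lemma K_pos : 0 < K.
Proof. unfold K; lra. Qed.

Lemma xi_pos : 0 < xi.
Proof.
  pose proof K_pos; pose proof (X_pos 0); pose proof (X_pos 1); pose proof (X_pos 2).
  apply Rdiv_lt_0_compat; nra.
Qed.

Lemma X_repr n : X n - xi = - (diff X (S n) + (1 + h) * diff X n) / K.
Proof.
  pose proof K_pos; pose proof (rec3_repr X _ (fun _ => 0) X_rec (fun _ => Rminus_diag 0) n).
  unfold xi, K in *; replace (X n) with ((1 + 2 * h) * X n / (1 + 2 * h)) by (field; lra).
  rewrite H0; field; lra.
Qed.

Lemma X_cv_fast : Un_cv (fun n => INR n * (X n - xi)) 0.
Proof.
  pose proof rec3_damped; pose proof K_pos.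
  assert (HD : rec2 h h (diff X) (fun _ => 0)) by apply (rec3_diff _ _ X_rec).
  pose proof (rec2_cv0 _ _ rec3_damped _ _ HD (cv_const 0)) as HD0.
  pose proof (rec2_homogeneous_fast _ _ rec3_damped _ HD) as Hn.
  pose proof (cv_S _ _ HD0) as HD1; pose proof (cv_S _ _ Hn) as Hn1; cbv beta in HD1, Hn1.
  apply (Un_cv_ext (fun n => - (INR (S n) * diff X (S n) - diff X (S n)
                                + (1 + h) * (INR n * diff X n)) / K)).
  - intros n; rewrite X_repr, S_INR; field; lra.
  - apply cv_limit_eq with (- (0 - 0 + (1 + h) * 0) / K); [solve_cv | field; lra].
Qed.

Lemma X_cv : Un_cv X xi.
Proof.
  pose proof cv_inv_INR.
  apply (cv_eventually_ext (fun n => INR n * (X n - xi) * / INR n + xi) _ _ 1).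
  - intros n Hn; field; apply not_0_INR; lia.
  - apply cv_limit_eq with (0 * 0 + xi); [pose proof X_cv_fast; solve_cv | ring].
Qed.

Let sumX n := INR n * xi - (X (S n) + (1 + h) * X n) / K.

Lemma sumX_diff n : sumX (S n) - sumX n = X n.
Proof.
  pose proof K_pos; pose proof (X_repr n).
  unfold sumX, diff in *; rewrite S_INR.
  apply (Rplus_eq_reg_r (- xi)); replace (X n + - xi) with (X n - xi) by ring.
  rewrite H0; field; lra.
Qed.

Let y1 := h * xi / K.

Lemma Y_cv : exists y0, Un_cv (fun n => Y n - y1 * INR n) y0.
Proof.
  pose proof K_pos; pose proof X_cv as HX; pose proof (cv_S _ _ HX) as HX1.
  assert (HDY : Un_cv (diff Y) y1).
  { apply cv_limit_eq with (h * xi / (1 + h + h)).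
    - apply (rec2_cv _ _ rec3_damped _ _ _ (rec3_diff _ _ Y_rec)); solve_cv.
    - unfold y1, K; f_equal; ring. }
  pose proof (cv_S _ _ HDY) as HDY1; cbv beta in HX1, HDY1.
  set (c := Y 2%nat + h * Y 1%nat + h * Y 0%nat - h * sumX 0%nat).
  eexists; apply (Un_cv_ext (fun n =>
    (c - h * (X (S n) + (1 + h) * X n) / K - diff Y (S n) - (1 + h) * diff Y n) / K)).
  - intros n; pose proof (rec3_repr Y _ (fun n => h * sumX n) Y_rec) as Hr.
    replace (Y n) with ((1 + 2 * h) * Y n / K) by (unfold K; field; lra).
    rewrite Hr by (intros; rewrite <- sumX_diff; ring).
    unfold c, sumX, y1, K; field; lra.
  - solve_cv.
Qed.

Let z2 := h * y1 / K.

Lemma Z_cv y0 : Un_cv (fun n => Y n - y1 * INR n) y0 ->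
  Un_cv (fun n => (Z n - z2 * INR n ^ 2) / INR n)
    ((h * (2 * y0 + xi) - 2 * h * y1 * (2 + h) / K) / K - z2).
Proof.
  intros HY; pose proof K_pos; pose proof X_cv.
  assert (HDZ := rec2_affine_cv _ _ rec3_damped _ _ (2 * h * y1) (h * (2 * y0 + xi))
                   (rec3_diff _ _ Z_rec)).
  replace (1 + h + h) with K in HDZ by (unfold K; ring).
  assert (He : Un_cv (fun n => h * (2 * Y n + X n) - 2 * h * y1 * INR n) (h * (2 * y0 + xi))).
  { apply (Un_cv_ext (fun n => h * (2 * (Y n - y1 * INR n) + X n))); [intros; ring | solve_cv]. }
  specialize (HDZ He).
  apply cv_div_INR_of_diff.
  apply (Un_cv_ext (fun n => (diff Z n - 2 * h * y1 / K * INR n) - z2)).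
  - intros n; unfold diff, z2; rewrite S_INR; field; lra.
  - solve_cv.
Qed.

Lemma mean_cv : Un_cv (fun n => Y n / X n / INR n) (h / (1 + 2 * h)).
Proof.
  pose proof K_pos; pose proof xi_pos; destruct Y_cv as [y0 HY].
  apply cv_limit_eq with (y1 / xi).
  - apply (ratio_mean_cv _ _ _ _ y0); auto using X_cv.
    + intros n; pose proof (X_pos n); lra.
    + lra.
  - unfold y1, K; field; lra.
Qed.

Lemma variance_cv :
  Un_cv (fun n => (Z n / X n - (Y n / X n) ^ 2) / INR n) (h * (1 - h) / (1 + 2 * h) ^ 3).
Proof.
  pose proof K_pos; pose proof xi_pos; destruct Y_cv as [y0 HY].
  eapply cv_limit_eq.
  - apply (ratio_variance_cv X Y Z xi y1 y0 z2 _ (fun n => Rgt_not_eq _ _ (X_pos n))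
             ltac:(lra) X_cv X_cv_fast HY (Z_cv y0 HY)).
    unfold z2, y1; field; lra.
  - unfold z2, y1, K; field; lra.
Qed.

End ThirdOrder.

Definition cbrt (x : R) : R := Rpower x (1 / 3).

Lemma cbrt_pos x : 0 < cbrt x.
Proof. apply exp_pos. Qed.

Lemma cbrt_cube x : 0 < x -> cbrt x ^ 3 = x.
Proof.
  intros Hx; unfold cbrt.
  rewrite <- (Rpower_pow 3) by apply exp_pos.
  rewrite Rpower_mult; replace (1 / 3 * INR 3) with 1 by (cbn; field).
  now apply Rpower_1.
Qed.

Lemma pos_cubic_root_unique c d x y : 0 < d -> 0 < x -> 0 < y ->
  x ^ 3 = c * x + d -> y ^ 3 = c * y + d -> x = y.
Proof.
  intros Hd Hx Hy Ex Ey.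
  (* Each root satisfies [x (x^2 - c) = d > 0], hence [x^2 > c]. *)
  assert (x ^ 2 > c) by nra; assert (y ^ 2 > c) by nra.
  assert (E : (x - y) * (x ^ 2 + x * y + y ^ 2 - c) = 0) by (ring_simplify; lra).
  apply Rmult_integral in E as [E | E]; nra.
Qed.

Lemma sqrt93_bounds : 9.6 < sqrt 93 < 9.7.
Proof.
  pose proof (sqrt_sqrt 93 ltac:(lra)); pose proof (sqrt_pos 93); split; nra.
Qed.

(* Cardano's formula for the real root of [31 s^3 - 3 s - 1]. *)
Definition cardano_root : R :=
  cbrt ((31 + 3 * sqrt 93) / 1922) + cbrt ((31 - 3 * sqrt 93) / 1922).

Lemma cardano_root_cubic : cardano_root ^ 3 = 3 / 31 * cardano_root + 1 / 31.
Proof.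
  pose proof sqrt93_bounds; pose proof (sqrt_sqrt 93 ltac:(lra)).
  unfold cardano_root.
  set (u := cbrt ((31 + 3 * sqrt 93) / 1922)); set (v := cbrt ((31 - 3 * sqrt 93) / 1922)).
  assert (Hu : u ^ 3 = (31 + 3 * sqrt 93) / 1922) by (apply cbrt_cube; lra).
  assert (Hv : v ^ 3 = (31 - 3 * sqrt 93) / 1922) by (apply cbrt_cube; lra).
  assert (Huv : u * v = 1 / 31).
  { apply (pos_cubic_root_unique 0 (1 / 31 ^ 3)); try lra.
    - apply Rmult_lt_0_compat; apply cbrt_pos.
    - rewrite Rpow_mult_distr, Hu, Hv.
      replace ((31 + 3 * sqrt 93) / 1922 * ((31 - 3 * sqrt 93) / 1922))
        with ((961 - 9 * (sqrt 93 * sqrt 93)) / 1922 ^ 2) by field.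
      rewrite H0; field. }
  replace ((u + v) ^ 3) with (u ^ 3 + v ^ 3 + 3 * (u * v) * (u + v)) by ring.
  rewrite Hu, Hv, Huv; field.
Qed.

Lemma cardano_root_range : 1 / 4 < cardano_root < 1.
Proof.
  pose proof cardano_root_cubic.
  assert (0 < cardano_root) by (apply Rplus_lt_0_compat; apply cbrt_pos).
  split; nra.
Qed.

(* [1 - h] is the reciprocal of the growth rate of the persolus counts, i.e.
   [(1 - h)^3 = h], and [h / (1 + 2 h)] is the limiting density of 1s. *)
Definition h_persolus : R := (1 - cardano_root) / (1 + 2 * cardano_root).

Lemma h_persolus_range : 0 <= h_persolus < 1 / 2.
Proof.
  pose proof cardano_root_range; unfold h_persolus; split.
  - apply Rmult_le_pos; [lra | left; apply Rinv_0_lt_compat; lra].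
  - apply Rmult_lt_reg_r with (1 + 2 * cardano_root); [lra|].
    unfold Rdiv; rewrite Rmult_assoc, Rinv_l; lra.
Qed.

Lemma h_persolus_cube : (1 - h_persolus) ^ 3 = h_persolus.
Proof.
  pose proof cardano_root_range; pose proof cardano_root_cubic.
  assert (Hc : 31 * cardano_root ^ 3 - 3 * cardano_root - 1 = 0) by lra.
  assert (E : (1 - h_persolus) ^ 3 - h_persolus =
    (31 * cardano_root ^ 3 - 3 * cardano_root - 1) / (1 + 2 * cardano_root) ^ 3)
    by (unfold h_persolus; field; lra).
  rewrite Hc in E; unfold Rdiv in E; rewrite Rmult_0_l in E; lra.
Qed.

Lemma mean_rate_persolus : h_persolus / (1 + 2 * h_persolus) =
  1/3 * (1 - Rpower ((31 + 3 * sqrt 93) / 1922) (1/3)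
           - Rpower ((31 - 3 * sqrt 93) / 1922) (1/3)).
Proof.
  pose proof cardano_root_range.
  change (Rpower ?x (1/3)) with (cbrt x).
  replace (1 - _ - _) with (1 - cardano_root) by (unfold cardano_root; ring).
  unfold h_persolus; field; lra.
Qed.


Lemma variance_rate_persolus :
  h_persolus * (1 - h_persolus) / (1 + 2 * h_persolus) ^ 3 =
  1/2883 * Rpower (93/2) (1/3)
    * (Rpower (8649 + 457 * sqrt 93) (1/3) + Rpower (8649 - 457 * sqrt 93) (1/3)).
Proof.
  pose proof cardano_root_range as Hs; pose proof cardano_root_cubic as Hc.
  pose proof sqrt93_bounds; pose proof (sqrt_sqrt 93 ltac:(lra)).
  change (Rpower ?x (1/3)) with (cbrt x).
  set (s := cardano_root) in *.
  set (p := cbrt (93 / 2) * cbrt (8649 + 457 * sqrt 93)).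
  set (q := cbrt (93 / 2) * cbrt (8649 - 457 * sqrt 93)).
  assert (Hp : p ^ 3 = 93 / 2 * (8649 + 457 * sqrt 93))
    by (unfold p; rewrite Rpow_mult_distr, !cbrt_cube; lra).
  assert (Hq : q ^ 3 = 93 / 2 * (8649 - 457 * sqrt 93))
    by (unfold q; rewrite Rpow_mult_distr, !cbrt_cube; lra).
  assert (0 < p) by (apply Rmult_lt_0_compat; apply cbrt_pos).
  assert (0 < q) by (apply Rmult_lt_0_compat; apply cbrt_pos).
  assert (Hpq : p * q = 4929).
  { apply (pos_cubic_root_unique 0 (4929 ^ 3)); try lra.
    - now apply Rmult_lt_0_compat.
    - rewrite Rpow_mult_distr, Hp, Hq.
      replace (93 / 2 * (8649 + 457 * sqrt 93) * (93 / 2 * (8649 - 457 * sqrt 93)))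
        with (93 / 2 * (93 / 2) * (8649 * 8649 - 457 * 457 * (sqrt 93 * sqrt 93))) by ring.
      rewrite H0; lra. }
  set (t := 2883 * (s * (1 - s) * (1 + 2 * s)) / 9).
  assert (Ht : t = p + q).
  { apply (pos_cubic_root_unique 14787 804357); try lra.
    - unfold t; assert (0 < s * (1 - s) * (1 + 2 * s)) by
        (apply Rmult_lt_0_compat; [apply Rmult_lt_0_compat|]; lra); lra.
    - assert (E : t ^ 3 - 14787 * t - 804357 = (31 * s ^ 3 - 3 * s - 1) *
        (804357 + 2323698 * s - 2234325 * s ^ 2 - 289062073 / 27 * s ^ 3
         + 5541126 * s ^ 4 + 114516604 / 9 * s ^ 5 - 229033208 / 27 * s ^ 6))
        by (unfold t; field).
      replace (31 * s ^ 3 - 3 * s - 1) with 0 in E by lra; lra.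
    - replace ((p + q) ^ 3) with (p ^ 3 + q ^ 3 + 3 * (p * q) * (p + q)) by ring.
      rewrite Hp, Hq, Hpq; lra. }
  replace (1 / 2883 * cbrt (93 / 2) * (cbrt (8649 + 457 * sqrt 93) + cbrt (8649 - 457 * sqrt 93)))
    with ((p + q) / 2883) by (unfold p, q; field).
  rewrite <- Ht; unfold t, h_persolus; fold s; field; lra.
Qed.

Lemma rec3_scaled (F g f : nat -> R) h : (1 - h) ^ 3 = h ->
  (forall m, F (S (S (S m))) = F (S (S m)) + F m + g m) ->
  (forall m, f m = h * (g m * (1 - h) ^ m)) ->
  rec3 h (fun m => F m * (1 - h) ^ m) f.
Proof.
  intros Hh HF Hf m; rewrite HF, Hf.
  set (l := 1 - h) in *; rewrite <- Hh; cbn [pow]; ring.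
Qed.

Lemma cv_div_INR_reindex (u v : nat -> R) k l : (forall m, u (k + m)%nat = v m) ->
  Un_cv (fun m => v m / INR m) l -> Un_cv (fun n => u n / INR n) l.
Proof.
  intros Huv Hv; apply (CV_shift _ k).
  pose proof (CV_shift' _ k _ cv_inv_INR) as Hk; cbv beta in Hk.
  apply (cv_eventually_ext (fun m => v m / INR m * (1 - INR k * / INR (m + k))) _ _ 1).
  - intros m Hm; rewrite Nat.add_comm, Huv, Nat.add_comm, plus_INR.
    assert (0 < INR m) by (apply lt_0_INR; lia); pose proof (pos_INR k).
    field; lra.
  - apply cv_limit_eq with (l * (1 - INR k * 0)); [solve_cv | ring].
Qed.

Definition scaled_pmoment (phi : nat -> R) (m : nat) : R :=
  pmoment phi (3 + m) * (1 - h_persolus) ^ m.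

Lemma scaled_count_rec : rec3 h_persolus (scaled_pmoment (fun _ => 1)) (fun _ => 0).
Proof.
  apply (rec3_scaled _ (fun _ => 0)); [apply h_persolus_cube | | intros; ring].
  intros m; change (pmoment (fun _ => 1) (6 + m) =
    pmoment (fun _ => 1) (5 + m) + pmoment (fun _ => 1) (3 + m) + 0).
  rewrite pmoment_rec; ring.
Qed.

Lemma scaled_mean_rec : rec3 h_persolus (scaled_pmoment INR)
  (fun m => h_persolus * scaled_pmoment (fun _ => 1) m).
Proof.
  apply (rec3_scaled _ (fun m => pmoment (fun _ => 1) (3 + m)));
    [apply h_persolus_cube | | intros; unfold scaled_pmoment; ring].
  intros m; change (pmoment INR (6 + m) =
    pmoment INR (5 + m) + pmoment INR (3 + m) + pmoment (fun _ => 1) (3 + m)).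
  rewrite pmoment_rec, pmoment_succ_id; ring.
Qed.

Lemma scaled_square_rec : rec3 h_persolus (scaled_pmoment (fun b => INR b ^ 2))
  (fun m => h_persolus * (2 * scaled_pmoment INR m + scaled_pmoment (fun _ => 1) m)).
Proof.
  apply (rec3_scaled _ (fun m => 2 * pmoment INR (3 + m) + pmoment (fun _ => 1) (3 + m)));
    [apply h_persolus_cube | | intros; unfold scaled_pmoment; ring].
  intros m; change (pmoment (fun b => INR b ^ 2) (6 + m) =
    pmoment (fun b => INR b ^ 2) (5 + m) + pmoment (fun b => INR b ^ 2) (3 + m)
    + (2 * pmoment INR (3 + m) + pmoment (fun _ => 1) (3 + m))).
  rewrite pmoment_rec, pmoment_succ_sqr; ring.
Qed.

Lemma scaled_count_pos m : 0 < scaled_pmoment (fun _ => 1) m.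
Proof.
  pose proof h_persolus_range.
  apply Rmult_lt_0_compat; [apply pmoment_count_pos | apply pow_lt; lra].
Qed.

Lemma ES_scaled m : ES (3 + m) = scaled_pmoment INR m / scaled_pmoment (fun _ => 1) m.
Proof.
  pose proof h_persolus_range; pose proof (pmoment_count_pos m).
  assert ((1 - h_persolus) ^ m <> 0) by (apply pow_nonzero; lra).
  rewrite ES_pmoment; unfold scaled_pmoment; field; lra.
Qed.

Lemma VS_scaled m : VS (3 + m) =
  scaled_pmoment (fun b => INR b ^ 2) m / scaled_pmoment (fun _ => 1) m
  - (scaled_pmoment INR m / scaled_pmoment (fun _ => 1) m) ^ 2.
Proof.
  pose proof h_persolus_range; pose proof (pmoment_count_pos m).
  assert ((1 - h_persolus) ^ m <> 0) by (apply pow_nonzero; lra).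
  rewrite VS_pmoment, ES_scaled by lra; unfold scaled_pmoment; field; lra.
Qed.

Theorem mainTheorem2 :
  Un_cv (fun n => ES n / INR n)
    (1/3 * (1 - Rpower ((31 + 3 * sqrt 93) / 1922) (1/3)
              - Rpower ((31 - 3 * sqrt 93) / 1922) (1/3)))
  /\
  Un_cv (fun n => VS n / INR n)
    (1/2883 * Rpower (93/2) (1/3)
       * (Rpower (8649 + 457 * sqrt 93) (1/3)
          + Rpower (8649 - 457 * sqrt 93) (1/3))).
Proof.
  split.
  - rewrite <- mean_rate_persolus.
    apply (cv_div_INR_reindex _ _ 3 _ ES_scaled).
    apply (mean_cv _ h_persolus_range);
      auto using scaled_count_rec, scaled_mean_rec, scaled_count_pos.
  - rewrite <- variance_rate_persolus.
    apply (cv_div_INR_reindex _ _ 3 _ VS_scaled).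
    apply (variance_cv _ h_persolus_range);
      auto using scaled_count_rec, scaled_mean_rec, scaled_square_rec, scaled_count_pos.
Qed.
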